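(* Let $F_1,F_2,F_3$ be smooth real functions of one variable and set $w_1=y+\sqrt3x$, $w_2=y-\sqrt3x$, $w_3=-2y$. Suppose that, identically in $(x,y)$, $$F_1'(w_1)\big(F_2(w_2)-F_3(w_3)\big)+F_2'(w_2)\big(F_3(w_3)-F_1(w_1)\big)+F_3'(w_3)\big(F_1(w_1)-F_2(w_2)\big)=0.$$ Then for the potential $V(x,y)=F_1(y+\sqrt3x)+F_2(y-\sqrt3x)+F_3(-2y)$ the function $$J=\dot x^3-3\dot x\dot y^2+3\big[F_1(y+\sqrt3x)+F_2(y-\sqrt3x)-2F_3(-2y)\big]\dot x-3\sqrt3\big[F_1(y+\sqrt3x)-F_2(y-\sqrt3x)\big]\dot y$$ is a first integral of the system $\ddot x=-V_{,x}$, $\ddot y=-V_{,y}$.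
   Context: A first integral is a function of $(t,x,y,\dot x,\dot y)$ whose total time derivative vanishes along every solution of the given equations of motion (on the domain where everything is smooth). *)

From Stdlib Require Import Reals.
From Coquelicot Require Import Coquelicot.
Open Scope R_scope.

Definition smooth (f : R -> R) : Prop := forall (n : nat) (x : R), ex_derive_n f n x.

Definition Vpot (F1 F2 F3 : R -> R) (x y : R) : R :=
  F1 (y + sqrt 3 * x) + F2 (y - sqrt 3 * x) + F3 (-2 * y).

Definition partial_x (V : R -> R -> R) (x y : R) : R := Derive (fun u => V u y) x.
Definition partial_y (V : R -> R -> R) (x y : R) : R := Derive (fun v => V x v) y.

Definition is_solution (V : R -> R -> R) (a b : R) (x y : R -> R) : Prop :=
  forall t, a < t < b ->
    ex_derive x t /\ ex_derive y t /\
    ex_derive (Derive x) t /\ ex_derive (Derive y) t /\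
    Derive (Derive x) t = - partial_x V (x t) (y t) /\
    Derive (Derive y) t = - partial_y V (x t) (y t).

Definition first_integral (V : R -> R -> R) (I : R -> R -> R -> R -> R -> R) : Prop :=
  forall (a b : R) (x y : R -> R), is_solution V a b x y ->
    forall t, a < t < b ->
      is_derive (fun s => I s (x s) (y s) (Derive x s) (Derive y s)) t 0.

Definition Jint (F1 F2 F3 : R -> R) (x y xd yd : R) : R :=
  xd ^ 3 - 3 * xd * yd ^ 2
  + 3 * (F1 (y + sqrt 3 * x) + F2 (y - sqrt 3 * x) - 2 * F3 (-2 * y)) * xd
  - 3 * sqrt 3 * (F1 (y + sqrt 3 * x) - F2 (y - sqrt 3 * x)) * yd.

(* Along a solution, x'' and y'' are replaced by -V_x and -V_y, whose only
   ingredients are F_i'(w_i).  After this substitution and sqrt 3 * sqrt 3 = 3,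
   the time derivative of J collapses to -6 sqrt 3 times the cyclic expression
   of the hypothesis, hence vanishes. *)

From Stdlib Require Import Reals Lra.
From Coquelicot Require Import Coquelicot.
Open Scope R_scope.

Lemma smooth_ex_derive (f : R -> R) : smooth f -> forall x, ex_derive f x.
Proof. intros hf x. exact (hf 1%nat x). Qed.

Section Potential.

Variables F1 F2 F3 : R -> R.
Hypotheses (d1 : forall w, ex_derive F1 w) (d2 : forall w, ex_derive F2 w)
  (d3 : forall w, ex_derive F3 w).

Lemma partial_x_Vpot (x y : R) :
  partial_x (Vpot F1 F2 F3) x y
  = sqrt 3 * Derive F1 (y + sqrt 3 * x) - sqrt 3 * Derive F2 (y - sqrt 3 * x).
Proof.
unfold partial_x, Vpot; apply is_derive_unique; auto_derive.
- now repeat split.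
- unfold Rminus; change (fun w => F1 w) with F1; change (fun w => F2 w) with F2; ring.
Qed.

Lemma partial_y_Vpot (x y : R) :
  partial_y (Vpot F1 F2 F3) x y
  = Derive F1 (y + sqrt 3 * x) + Derive F2 (y - sqrt 3 * x)
    - 2 * Derive F3 (-2 * y).
Proof.
unfold partial_y, Vpot; apply is_derive_unique; auto_derive.
- now repeat split.
- unfold Rminus; change (fun w => F1 w) with F1; change (fun w => F2 w) with F2;
    change (fun w => F3 w) with F3; ring.
Qed.

Lemma is_derive_Jint_along (x y : R -> R) (t : R) :
  ex_derive x t -> ex_derive y t ->
  ex_derive (Derive x) t -> ex_derive (Derive y) t ->
  let w1 := y t + sqrt 3 * x t in
  let w2 := y t - sqrt 3 * x t in
  let w3 := -2 * y t in
  let u := Derive x t in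
  let v := Derive y t in
  let p := Derive (Derive x) t in
  let q := Derive (Derive y) t in
  is_derive (fun s => Jint F1 F2 F3 (x s) (y s) (Derive x s) (Derive y s)) t
    (3 * (u ^ 2 - v ^ 2) * p - 6 * u * v * q
     + 3 * (Derive F1 w1 * (v + sqrt 3 * u) + Derive F2 w2 * (v - sqrt 3 * u)
            + 4 * Derive F3 w3 * v) * u
     + 3 * (F1 w1 + F2 w2 - 2 * F3 w3) * p
     - 3 * sqrt 3 * (Derive F1 w1 * (v + sqrt 3 * u)
                     - Derive F2 w2 * (v - sqrt 3 * u)) * v
     - 3 * sqrt 3 * (F1 w1 - F2 w2) * q).
Proof.
intros ex ey exx eyy; unfold Jint; auto_derive.
- now repeat split.
- unfold Rminus; change (fun w => F1 w) with F1; change (fun w => F2 w) with F2;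
    change (fun w => F3 w) with F3; change (fun s => x s) with x;
    change (fun s => y s) with y; change (fun s => Derive x s) with (Derive x);
    change (fun s => Derive y s) with (Derive y); ring.
Qed.

End Potential.

Lemma Jint_rate_on_solution (s a1 a2 a3 A1 A2 A3 u v : R) :
  s * s = 3 ->
  3 * (u ^ 2 - v ^ 2) * - (s * a1 - s * a2) - 6 * u * v * - (a1 + a2 - 2 * a3)
  + 3 * (a1 * (v + s * u) + a2 * (v - s * u) + 4 * a3 * v) * u
  + 3 * (A1 + A2 - 2 * A3) * - (s * a1 - s * a2)
  - 3 * s * (a1 * (v + s * u) - a2 * (v - s * u)) * v
  - 3 * s * (A1 - A2) * - (a1 + a2 - 2 * a3)
  = -6 * s * (a1 * (A2 - A3) + a2 * (A3 - A1) + a3 * (A1 - A2)).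
Proof.
intros hs.
transitivity (-6 * s * (a1 * (A2 - A3) + a2 * (A3 - A1) + a3 * (A1 - A2))
              - 3 * (s * s - 3) * (a1 + a2) * u * v); [ring | rewrite hs; ring].
Qed.

Theorem mainTheorem2 (F1 F2 F3 : R -> R)
  (h1 : smooth F1) (h2 : smooth F2) (h3 : smooth F3)
  (hcond : forall x y : R,
     let w1 := y + sqrt 3 * x in
     let w2 := y - sqrt 3 * x in
     let w3 := -2 * y in
     Derive F1 w1 * (F2 w2 - F3 w3) + Derive F2 w2 * (F3 w3 - F1 w1)
       + Derive F3 w3 * (F1 w1 - F2 w2) = 0) :
  first_integral (Vpot F1 F2 F3) (fun _ x y xd yd => Jint F1 F2 F3 x y xd yd).
Proof.
pose proof (smooth_ex_derive _ h1) as d1.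
pose proof (smooth_ex_derive _ h2) as d2.
pose proof (smooth_ex_derive _ h3) as d3.
intros a b x y hsol t ht.
destruct (hsol t ht) as (ex & ey & exx & eyy & hxx & hyy).
rewrite partial_x_Vpot in hxx by assumption.
rewrite partial_y_Vpot in hyy by assumption.
pose proof (is_derive_Jint_along F1 F2 F3 d1 d2 d3 x y t ex ey exx eyy) as hJ.
specialize (hcond (x t) (y t)); cbv zeta in hJ, hcond.
rewrite hxx, hyy, Jint_rate_on_solution, hcond, Rmult_0_r in hJ
  by (apply sqrt_sqrt; lra).
exact hJ.
Qed.
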